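(* Let $n\ge1$. Every $\mathbf A\in\mathsf{PMV}_n$ embeds into the Priestley power of its distributive skeleton. That is, there is an injective homomorphism $\mathbf A\hookrightarrow\mathfrak P\mathfrak S(\mathbf A)=\mathbf{P\L}_n[\mathfrak S(\mathbf A)]$; it is the unit of the adjunction $\mathfrak S\dashv\mathfrak P$.
   Context: For $n\ge 1$, the algebra $\mathbf{P\L}_n=\langle\{0,\tfrac1n,\dots,1\},\min,\max,\odot,\oplus,0,1\rangle$ has $x\odot y=\max\{0,x+y-1\}$ and $x\oplus y=\min\{1,x+y\}$. $\mathsf{PMV}_n$ is the variety it generates. - The distributive skeleton is $\mathfrak S(\mathbf A)=\langle\{a\in A:a\oplus a=a\},\wedge,\vee,0,1\rangle$, a bounded distributive lattice. - For a bounded distributive lattice $\mathbf L$, the Priestley power $\mathbf{P\L}_n[\mathbf L]$ is the algebra, under pointwise operations, of continuous order-preserving maps from the Priestley dual space $\mathsf{DL}(\mathbf L,\mathbf 2)$ to the discrete ordered set $\langle\{0,\tfrac1n,\dots,1\},\le\rangle$. The dual space carries the pointwise order and product topology. - $\mathfrak P(\mathbf L)=\mathbf{P\L}_n[\mathbf L]$ defines a functor $\mathsf{DL}\to\mathsf{PMV}_n$ that is right adjoint to $\mathfrak S$. *)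

From HB Require Import structures.
From mathcomp Require Import all_boot all_order.
From Stdlib Require List.
Set Implicit Arguments.
Unset Strict Implicit.
Unset Printing Implicit Defensive.
Import Order.TTheory.
Local Open Scope order_scope.

Record pmvAlg := PmvAlg {
  car :> Type;
  pmeet : car -> car -> car;
  pjoin : car -> car -> car;
  podot : car -> car -> car;
  poplus : car -> car -> car;
  pzero : car;
  pone : car }.

Inductive term :=
| tVar of nat
| tZero
| tOne
| tMeet of term & term
| tJoin of term & term
| tOdot of term & term
| tOplus of term & term.

Fixpoint eval (A : pmvAlg) (v : nat -> A) (t : term) : A :=
  match t with
  | tVar i => v i
  | tZero => pzero A
  | tOne => pone A
  | tMeet s u => pmeet (eval v s) (eval v u)
  | tJoin s u => pjoin (eval v s) (eval v u)
  | tOdot s u => podot (eval v s) (eval v u)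
  | tOplus s u => poplus (eval v s) (eval v u)
  end.

(* The algebra PL_n, with the element k/n (0 <= k <= n) encoded by k. *)
Definition odotL (n k l : nat) : nat := (k + l - n)%N.   (* max{0, x+y-1} *)
Definition oplusL (n k l : nat) : nat := minn n (k + l). (* min{1, x+y}   *)

Fixpoint evalL (n : nat) (v : nat -> nat) (t : term) : nat :=
  match t with
  | tVar i => v i
  | tZero => 0%N
  | tOne => n
  | tMeet s u => minn (evalL n v s) (evalL n v u)
  | tJoin s u => maxn (evalL n v s) (evalL n v u)
  | tOdot s u => odotL n (evalL n v s) (evalL n v u)
  | tOplus s u => oplusL n (evalL n v s) (evalL n v u)
  end.

Definition PL_identity (n : nat) (s t : term) : Prop :=
  forall v : nat -> nat, (forall i, v i <= n)%N -> evalL n v s = evalL n v t.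

(* A belongs to PMV_n, the variety generated by PL_n, i.e. A satisfies
   every identity valid in PL_n. *)
Definition in_PMV (n : nat) (A : pmvAlg) : Prop :=
  forall s t : term, PL_identity n s t ->
    forall v : nat -> A, eval v s = eval v t.

Definition skel (A : pmvAlg) : Type := {a : A | poplus a a = a}.

(* Points of the Priestley dual DL(S(A), 2): bounded lattice homs
   S(A) -> 2, the operations of S(A) being those of A restricted. *)
Definition skel_dual (A : pmvAlg) (x : skel A -> bool) : Prop :=
  [/\ forall s t u : skel A, sval u = pmeet (sval s) (sval t) -> x u = x s && x t,
      forall s t u : skel A, sval u = pjoin (sval s) (sval t) -> x u = x s || x t,
      forall u : skel A, sval u = pzero A -> x u = false &
      forall u : skel A, sval u = pone A -> x u = true].

Definition lat_dual (d : Order.disp_t) (L : tbDistrLatticeType d)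
    (x : L -> bool) : Prop :=
  [/\ forall a b : L, x (a `&` b) = x a && x b,
      forall a b : L, x (a `|` b) = x a || x b,
      x \bot = false & x \top = true].

(* Priestley powers PL_n[L].  The dual space is the set of x : T -> bool *)
(* satisfying D, with the pointwise order and the subspace topology of    *)
(* the product topology on 2^T.  An element of PL_n[L] is represented by  *)
(* a function phi : (T -> bool) -> nat whose restriction to the dual      *)
(* space is meant (values k <= n encode k/n); two such are equal as       *)
(* elements iff they agree on the dual space.                             *)
(* Continuity into a discrete space = every point has a basic (cylinder)  *)
(* neighbourhood, determined by finitely many coordinates, on which phi   *)
(* is constant.                                                           *)
Definition in_PP (n : nat) (T : Type) (D : (T -> bool) -> Prop)
    (phi : (T -> bool) -> nat) : Prop :=
  [/\ forall x, D x -> (phi x <= n)%N,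
      forall x y, D x -> D y -> (forall a, x a ==> y a) -> (phi x <= phi y)%N &
      forall x, D x -> exists s : list T, forall y, D y ->
          (forall a, List.In a s -> y a = x a) -> phi y = phi x].

Definition PP_eq (T : Type) (D : (T -> bool) -> Prop)
    (phi psi : (T -> bool) -> nat) : Prop :=
  forall x, D x -> phi x = psi x.

Definition PP_hom (n : nat) (A : pmvAlg) (T : Type) (D : (T -> bool) -> Prop)
    (f : A -> (T -> bool) -> nat) : Prop :=
  (forall a, in_PP n D (f a)) /\
  (forall x, D x ->
    [/\ forall a b, f (pmeet a b) x = minn (f a x) (f b x),
        forall a b, f (pjoin a b) x = maxn (f a x) (f b x),
        forall a b, f (podot a b) x = odotL n (f a x) (f b x) &
        forall a b, f (poplus a b) x = oplusL n (f a x) (f b x)] /\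
    f (pzero A) x = 0%N /\ f (pone A) x = n).

Definition skel_lat_hom (A : pmvAlg) (d : Order.disp_t)
    (L : tbDistrLatticeType d) (g : skel A -> L) : Prop :=
  [/\ forall s t u : skel A, sval u = pmeet (sval s) (sval t) -> g u = g s `&` g t,
      forall s t u : skel A, sval u = pjoin (sval s) (sval t) -> g u = g s `|` g t,
      forall u : skel A, sval u = pzero A -> g u = \bot &
      forall u : skel A, sval u = pone A -> g u = \top].

(* eta : A -> PL_n[S(A)] is a universal arrow from A to the functor P:
   for every bounded distributive lattice L and homomorphism
   f : A -> PL_n[L] there is a unique lattice hom g : S(A) -> L with
   f = P(g) o eta, where P(g)(phi) = phi o DL(g,2), i.e.
   P(g)(phi)(y) = phi (y o g).  This is what it means for eta to be
   (the A-component of) the unit of S -| P. *)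
Definition is_unit (n : nat) (A : pmvAlg)
    (eta : A -> (skel A -> bool) -> nat) : Prop :=
  PP_hom n (@skel_dual A) eta /\
  forall (d : Order.disp_t) (L : tbDistrLatticeType d)
         (f : A -> (L -> bool) -> nat),
    PP_hom n (@lat_dual d L) f ->
    exists g : skel A -> L,
      [/\ skel_lat_hom g,
          forall a y, lat_dual y -> f a y = eta a (fun s => y (g s)) &
          forall g' : skel A -> L, skel_lat_hom g' ->
            (forall a y, lat_dual y -> f a y = eta a (fun s => y (g' s))) ->
            forall s, g' s = g s].

From HB Require Import structures.
From mathcomp Require Import all_boot all_order zify.
From mathcomp Require Import boolp classical_sets.

(* For 0 < k <= n there is a unary term tau_k that computes in PL_n the
   indicator of [k/n, 1].  Since A satisfies every identity
   of PL_n, the tau_k a are idempotent, the skeleton S(A) is a bounded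
   distributive lattice, and identities relating tau_k with the operations
   make  eta a x := #{k | tau_k a \in x}  a homomorphism A -> PL_n[S(A)].
   The family (tau_k a)_k determines a, and prime filters separate
   the points of S(A), so eta is injective.  Conversely, for a homomorphism
   f : A -> PL_n[L], the top level set of f s (s idempotent) is a clopen
   up-set of the dual of L; by compactness it is the set of prime filters
   containing a unique g s, and g is the required lattice homomorphism. *)

Set Implicit Arguments.
Unset Strict Implicit.
Unset Printing Implicit Defensive.

Import Order.TTheory.

Lemma InP (T : eqType) (x : T) (s : seq T) : reflect (List.In x s) (x \in s).
Proof.
elim: s => [|y s IH] /=; first by constructor.
by rewrite inE; apply: (iffP orP) => [[/eqP -> | /IH] | [-> | /IH]]; auto.
Qed.

Section Compactness.
Variable X : eqType.
Implicit Types (p : seq (X * bool)) (y z : X -> bool).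

Definition fits p z := all (fun u => z u.1 == u.2) p.

Lemma fits_graph y s : fits [seq (a, y a) | a <- s] y.
Proof. by apply/allP => _ /mapP [a _ ->] /=. Qed.

Section Lindenbaum.
Local Open Scope classical_set_scope.
Variable consistent : seq (X * bool) -> Prop.
Hypothesis consistent_sub : forall p q, {subset q <= p} -> consistent p -> consistent q.
Hypothesis consistent_split : forall p a,
  consistent p -> consistent ((a, true) :: p) \/ consistent ((a, false) :: p).
Hypothesis consistent_nil : consistent [::].

Let good (S : set (X * bool)) := forall p, (forall u, u \in p -> S u) -> consistent p.

Let chain_bounded (F : set (set (X * bool))) p : total_on F subset ->
  (forall u, u \in p -> (\bigcup_(S in F) S) u) ->
  p = [::] \/ exists2 S, F S & forall u, u \in p -> S u.
Proof.
move=> Ftot; elim: p => [|u p IH] p_sub; first by left.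
right; have [S FS Su] := p_sub u (mem_head _ _).
case: IH => [v vp | -> | [S' FS' pS']]; first by apply: p_sub; rewrite inE vp orbT.
  by exists S => // v; rewrite inE => /eqP ->.
case: (Ftot S S' FS FS') => [SS' | S'S].
- by exists S' => // v; rewrite inE => /predU1P [-> | /pS'//]; apply: SS'.
- by exists S => // v; rewrite inE => /predU1P [-> | /pS'/S'S].
Qed.

Let good_total S : good S -> (forall T, S `<` T -> ~ good T) ->
  forall a, S (a, true) \/ S (a, false).
Proof.
move=> goodS maxS a; apply: contrapT => /not_orP [nSt nSf].
have bad b : ~ S (a, b) ->
    exists2 p, (forall u, u \in p -> S u \/ u = (a, b)) & ~ consistent p.
  move=> nS; apply: contrapT => all_cons; apply: (maxS (S `|` [set (a, b)])).
    by split => [u Su | /(_ (a, b)) BA]; [left | apply/nS/BA; right].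
  by move=> p p_sub; apply: contrapT => np; apply: all_cons; exists p.
have [[p1 sub1 nc1] [p2 sub2 nc2]] := (bad true nSt, bad false nSf).
pose q := [seq u <- p1 ++ p2 | `[< S u >]].
have qS u : u \in q -> S u by rewrite mem_filter => /andP [/asboolP].
have sub_q b p : {subset p <= p1 ++ p2} ->
    (forall u, u \in p -> S u \/ u = (a, b)) -> {subset p <= (a, b) :: q}.
  move=> pp sp u up; rewrite inE; case: (sp u up) => [Su | ->]; last by rewrite eqxx.
  by apply/orP; right; rewrite mem_filter (pp u up) andbT; apply/asboolP.
case: (consistent_split a (goodS q qS)) => [ct | cf].
- by apply: nc1; apply: consistent_sub ct; apply: sub_q sub1 => u; rewrite mem_cat => ->.
- by apply: nc2; apply: consistent_sub cf; apply: sub_q sub2 => u; rewrite mem_cat orbC => ->.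
Qed.

Lemma consistent_assignment : exists y, forall p, fits p y -> consistent p.
Proof.
have [S [goodS maxS]] : exists S, good S /\ forall T, S `<` T -> ~ good T.
  apply: Zorn_bigcup => F Fgood Ftot p p_sub.
  by case: (chain_bounded Ftot p_sub) => [-> // | [S FS pS]]; apply: Fgood FS p pS.
have total := good_total goodS maxS.
exists (fun a => `[< S (a, true) >]) => p /allP fits_p.
apply: goodS => -[a b] /fits_p /eqP /=.
by case: b => [/asboolP // | /asboolPn nS]; case: (total a).
Qed.

End Lindenbaum.

(* The sets [fits p] are the basic clopen sets of the product topology on
   [X -> bool]. *)
Definition product_closed (K : (X -> bool) -> Prop) :=
  forall y, ~ K y -> exists2 p, fits p y & forall z, fits p z -> ~ K z.

Lemma compact_cover (K : (X -> bool) -> Prop) (U : X -> Prop) (b : bool) :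
  product_closed K -> (forall y, K y -> exists2 a, U a & y a = b) ->
  exists2 s : seq X, (forall a, a \in s -> U a) & forall y, K y -> exists2 a, a \in s & y a = b.
Proof.
move=> K_closed K_sub; apply: contrapT => no_cover.
pose covers s p := forall z, K z -> fits p z -> has (fun a => z a == b) s.
pose consistent p := forall s, (forall a, a \in s -> U a) -> ~ covers s p.
have [y yP] : exists y, forall p, fits p y -> consistent p.
  apply: consistent_assignment.
  - move=> p q qp cp s sU covs; apply: (cp s sU) => z Kz /allP fz.
    by apply: covs => //; apply/allP => u /qp /fz.
  - move=> p a cp; apply: contrapT => /not_orP [].
    move=> /existsNP [s1 /not_implyP [U1 /contrapT cov1]].
    move=> /existsNP [s2 /not_implyP [U2 /contrapT cov2]].
    apply: (cp (s1 ++ s2)) => [u | z Kz fz]; first by rewrite mem_cat => /orP [/U1 | /U2].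
    rewrite has_cat; case za: (z a); [rewrite cov1 | rewrite cov2 ?orbT] => //=;
      by rewrite za eqxx.
  - move=> s sU covs; apply: no_cover; exists s => // y Ky.
    by have /hasP [a sa /eqP] := covs y Ky isT; exists a.
have Ky : K y.
  apply: contrapT => nKy; have [p py pK] := K_closed y nKy.
  by apply: (yP p py [::]) => // z Kz /pK.
have [a Ua ya] := K_sub y Ky.
apply: (yP [:: (a, b)] _ [:: a]) => [|u | z _]; first by rewrite /fits /= ya eqxx.
  by rewrite inE => /eqP ->.
by rewrite /fits /= andbT orbF.
Qed.

End Compactness.

Section PrimeFilters.
Variables (d : Order.disp_t) (L : tbDistrLatticeType d).
Local Open Scope order_scope.
Implicit Types (a b : L) (y : L -> bool).

Lemma lat_dual_le y a b : lat_dual y -> a <= b -> y a -> y b.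
Proof. by case=> yI _ _ _ /meet_idPl <-; rewrite yI => /andP []. Qed.

Lemma lat_dual_meets y (s : seq L) : lat_dual y -> y (\meet_(a <- s) a) = all y s.
Proof. by case=> yI _ _ y1; elim: s => [|a s IH]; rewrite ?big_nil ?big_cons //= yI IH. Qed.

Lemma lat_dual_joins y (s : seq L) : lat_dual y -> y (\join_(a <- s) a) = has y s.
Proof. by case=> _ yU y0 _; elim: s => [|a s IH]; rewrite ?big_nil ?big_cons //= yU IH. Qed.

Let entails y := forall P N : seq L,
  \meet_(u <- P) u <= \join_(u <- N) u -> all y P -> has y N.

Let lat_dual_entails y : entails y -> lat_dual y.
Proof.
move=> ent.
have y_le u v : u <= v -> y u -> y v.
  move=> le_uv yu; have := ent [:: u] [:: v].
  by rewrite !big_cons !big_nil meetx1 joinx0 /= yu orbF; apply.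
split.
- move=> u v; apply/idP/andP => [yuv | [yu yv]].
    by split; apply: y_le yuv; [apply: leIl | apply: leIr].
  have := ent [:: u; v] [:: u `&` v].
  by rewrite !big_cons !big_nil meetx1 joinx0 /= yu yv orbF; apply.
- move=> u v; apply/idP/orP => [yuv | [yu | yv]].
  + have := ent [:: u `|` v] [:: u; v].
    by rewrite !big_cons !big_nil meetx1 joinx0 /= yuv orbF => /(_ (lexx _) isT)/orP.
  + exact: y_le (leUl u v) yu.
  + exact: y_le (leUr v u) yv.
- case y0: (y \bot) => //; have := ent [:: \bot] [::].
  by rewrite !big_cons !big_nil meetx1 /= y0 => /(_ (lexx _) isT).
- by have := ent [::] [:: \top]; rewrite !big_cons !big_nil joinx0 /= orbF; apply.
Qed.

Let entailing_separation a b : ~~ (a <= b) -> exists y, [/\ entails y, y a & ~~ y b].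
Proof.
move=> nab.
pose M (p : seq (L * bool)) := \meet_(u <- p | u.2) u.1.
pose J (p : seq (L * bool)) := \join_(u <- p | ~~ u.2) u.1.
pose consistent p := ~~ (a `&` M p <= b `|` J p).
have [y yP] : exists y, forall p, fits p y -> consistent p.
  apply: consistent_assignment => [p q qp | p c | ].
  - apply: contraNN => le_q; apply: le_trans (le_trans _ le_q) _.
    + by apply: leI2 => //; apply/meetsP_seq => u /qp up u2; apply: meets_inf_seq.
    + by apply: leU2 => //; apply/joinsP_seq => u /qp up u2; apply: joins_sup_seq.
  - rewrite /consistent /M /J !big_cons /= => cp; apply: contrapT => /not_orP [].
    move=> /negP /negbNE le_t /negP /negbNE le_f; move/negP: cp; apply.
    rewrite meetCA meetC in le_t; rewrite joinCA joinC in le_f.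
    by rewrite -(meet_idPl le_f) meetUr leUx leIr.
  - by rewrite /consistent /M /J !big_nil meetx1 joinx0.
exists y; split.
- move=> P N le_PN yP'; apply/negPn/negP => /hasPn yN.
  set p := [seq (u, true) | u <- P] ++ [seq (u, false) | u <- N].
  have fit_p : fits p y.
    rewrite /fits all_cat !all_map; apply/andP; split; apply/allP => u uP /=.
      by rewrite eqb_id (allP yP').
    by rewrite eqbF_neg yN.
  apply: (negP (yP p fit_p)); rewrite /M /J !big_cat !big_map /= !big_pred0_eq meetx1 join0x.
  exact: le_trans (leIr _ _) (le_trans le_PN (leUr _ _)).
- apply/negPn/negP => nya; have fit_a : fits [:: (a, false)] y by rewrite /fits /= (negbTE nya).
  by apply: (negP (yP _ fit_a)); rewrite /M /J !big_cons !big_nil /= meetx1 joinx0 leUr.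
- apply/negP => yb; have fit_b : fits [:: (b, true)] y by rewrite /fits /= yb.
  by apply: (negP (yP _ fit_b)); rewrite /M /J !big_cons !big_nil /= meetx1 joinx0 leIr.
Qed.

Lemma lat_dual_separate a b : ~~ (a <= b) -> exists y, [/\ lat_dual y, y a & ~~ y b].
Proof.
by case/entailing_separation => y [/lat_dual_entails ? ? ?]; exists y.
Qed.

Lemma lat_dual_inj a b : (forall y, lat_dual y -> y a = y b) -> a = b.
Proof.
move=> same; apply/le_anti/andP; split; apply: contraT.
- by case/lat_dual_separate => y [/same -> ? /negP].
- by case/lat_dual_separate => y [/same <- ? /negP].
Qed.

Lemma lat_dual_closed : product_closed (@lat_dual d L).
Proof.
move=> y nDy; apply: contrapT => no_nbhd.
have near (s : seq L) : exists2 z, lat_dual z & all (fun a => z a == y a) s.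
  apply: contrapT => no_z; apply: no_nbhd; exists [seq (a, y a) | a <- s] => [|z].
    exact: fits_graph.
  by rewrite /fits all_map => fz Dz; apply: no_z; exists z.
apply: nDy; split.
- move=> a b; have [z [zI _ _ _]] := near [:: a `&` b; a; b].
  by case/and4P => /eqP <- /eqP <- /eqP <- _; apply: zI.
- move=> a b; have [z [_ zU _ _]] := near [:: a `|` b; a; b].
  by case/and4P => /eqP <- /eqP <- /eqP <- _; apply: zU.
- by have [z [_ _ z0 _]] := near [:: \bot]; case/andP => /eqP <-.
- by have [z [_ _ _ z1]] := near [:: \top]; case/andP => /eqP <-.
Qed.

Section TopLevelSet.
Variables (n : nat) (phi : (L -> bool) -> nat).
Hypothesis phiP : in_PP n (@lat_dual d L) phi.

Lemma in_PP_level_closed (Q : nat -> Prop) : product_closed (fun z => lat_dual z /\ Q (phi z)).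
Proof.
case: phiP => _ _ loc y nK; have [Dy | nDy] := pselect (lat_dual y); last first.
  by have [p py pD] := lat_dual_closed nDy; exists p => // z /pD nDz [].
have [s sP] := loc y Dy; exists [seq (a, y a) | a <- s]; first exact: fits_graph.
move=> z; rewrite /fits all_map => /allP fz [Dz Qz]; apply: nK; split => //.
by rewrite -(sP z Dz) // => a /InP /fz /eqP.
Qed.

Lemma in_PP_top_nbhd y : lat_dual y -> phi y = n ->
  exists2 l, y l & forall z, lat_dual z -> z l -> phi z = n.
Proof.
move=> Dy phi_y; have [phi_le mono _] := phiP.
have cover_K z : lat_dual z /\ phi z <> n -> exists2 a, y a & z a = false.
  move=> [Dz nz]; apply: contrapT => /forallPNP yz; apply: nz; apply/eqP.
  rewrite eqn_leq phi_le //= -{1}phi_y; apply: mono => // a.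
  by apply/implyP => ya; move: (yz a ya); case: (z a).
have [s sy s_cover] := compact_cover (@in_PP_level_closed (fun v => v <> n)) cover_K.
exists (\meet_(a <- s) a); first by rewrite lat_dual_meets //; apply/allP.
move=> z Dz; rewrite lat_dual_meets // => /allP zs; apply: contrapT => nz.
by have [a /zs za] := s_cover z (conj Dz nz); rewrite za.
Qed.

Lemma in_PP_top_principal : exists l, forall y, lat_dual y -> y l = (phi y == n).
Proof.
have cover_K y : lat_dual y /\ phi y = n ->
    exists2 l, (forall z, lat_dual z -> z l -> phi z = n) & y l = true.
  by move=> [Dy phi_y]; have [l yl lP] := in_PP_top_nbhd Dy phi_y; exists l.
have [s sP s_cover] := compact_cover (@in_PP_level_closed (fun v => v = n)) cover_K.
exists (\join_(l <- s) l) => y Dy; rewrite lat_dual_joins //.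
apply/hasP/eqP => [[l /sP lP yl] | phi_y]; first exact: lP.
by have [l sl yl] := s_cover y (conj Dy phi_y); exists l.
Qed.

End TopLevelSet.

End PrimeFilters.

Lemma count_iota_prefix N c (q : pred nat) : c <= N ->
  (forall k, 0 < k <= N -> q k = (k <= c)) -> count q (iota 1 N) = c.
Proof.
move=> c_le q_prefix; rewrite (@eq_in_count _ _ (fun k => k <= c)); last first.
  by move=> k; rewrite mem_iota => k_range; apply: q_prefix; lia.
rewrite -(subnKC c_le) iotaD count_cat (@eq_in_count _ _ predT) ?count_predT ?size_iota; last first.
  by move=> k; rewrite mem_iota /=; lia.
rewrite (@eq_in_count _ _ pred0) ?count_pred0 ?addn0 // => k; rewrite mem_iota /=; lia.
Qed.

Lemma count_iota_downclosed N (p : pred nat) :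
  (forall i k, 0 < i <= k -> k <= N -> p k -> p i) ->
  forall k, 0 < k <= N -> p k = (k <= count p (iota 1 N)).
Proof.
elim: N => [|N IH] p_down k k_range; first lia.
have count_le : count p (iota 1 N) <= N by rewrite -[X in _ <= X](size_iota 1 N) count_size.
rewrite -[N.+1]addn1 iotaD count_cat /= addn0 add1n.
case pN: (p N.+1).
  have all_p i : 0 < i <= N.+1 -> p i by move=> i_range; apply: (p_down i N.+1) => //; lia.
  rewrite (@count_iota_prefix N N) ?all_p //; first lia.
  by move=> i i_range; rewrite all_p //; lia.
rewrite addn0; case: (eqVneq k N.+1) => [-> | kN]; first by rewrite pN; apply/esym/negbTE; lia.
have p_downN i j : 0 < i <= j -> j <= N -> p j -> p i by move=> ij jN; apply: p_down ij (leqW jN).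
by rewrite (IH p_downN k) //; lia.
Qed.

Section ThresholdTerms.
Variable n : nat.

Lemma evalL_le v t : (forall i, v i <= n) -> evalL n v t <= n.
Proof. by move=> v_le; elim: t => //= *; rewrite /odotL /oplusL; lia. Qed.

Fixpoint tpow s m := if m is m'.+1 then tOdot s (tpow s m') else tOne.
Fixpoint tmul s m := if m is m'.+1 then tOplus s (tmul s m') else tZero.

Lemma evalL_tpow w s m : evalL n w s <= n ->
  evalL n w (tpow s m) = n - m * (n - evalL n w s).
Proof.
move=> s_le; elim: m => [|m IH] /=; first lia.
by rewrite IH /odotL mulSn; set p := m * _; lia.
Qed.

Lemma evalL_tmul w s m : evalL n w (tmul s m) = minn n (m * evalL n w s).
Proof. by elim: m => [|m IH] /=; [lia | rewrite IH /oplusL mulSn; set p := m * _; lia]. Qed.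

(* Replacing [s] by [s ⊕ s] or by [s ⊙ s] widens the gap [hi - lo]; once
   [hi = n] or [lo = 1], a power or a multiple of [s] separates. *)
Lemma separating_term s lo hi : 0 < lo <= hi -> hi <= n ->
  exists t, forall w, (forall i, w i <= n) ->
    (hi <= evalL n w s -> evalL n w t = n) /\ (evalL n w s < lo -> evalL n w t = 0).
Proof.
have [m] := ubnP (if hi == n then 0 else n - (hi - lo)).
elim: m s lo hi => // m IH s lo hi lt_m lohi hin.
case: (eqVneq hi n) => [hi_n | hi_n].
  exists (tpow s n) => w w_le; have s_le := evalL_le s w_le.
  by rewrite evalL_tpow //; nia.
case: (eqVneq lo 1) => [lo_1 | lo_1].
  by exists (tmul s n) => w w_le; rewrite evalL_tmul; nia.
rewrite (negbTE hi_n) in lt_m; case: (leqP (2 * lo) n.+1) => lo_small.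
- have [t Ht] := IH (tOplus s s) (2 * lo - 1) (minn n (2 * hi))
    ltac:(case: eqP; lia) ltac:(lia) ltac:(lia).
  by exists t => w w_le; have /= := Ht w w_le; rewrite /oplusL; lia.
- have [t Ht] := IH (tOdot s s) (2 * lo - 1 - n) (2 * hi - n)
    ltac:(case: eqP; lia) ltac:(lia) ltac:(lia).
  exists t => w w_le; have /= := Ht w w_le; have := evalL_le s w_le.
  by rewrite /odotL; lia.
Qed.

Lemma threshold_term k : exists t, forall w, (forall i, w i <= n) ->
  evalL n w t = if k <= w 0 then n else 0.
Proof.
case: (posnP k) => [-> | k_gt0]; first by exists tOne.
case: (leqP k n) => k_le; last first.
  by exists tZero => w w_le /=; have := w_le 0; case: ifP; lia.
have [t Ht] := @separating_term (tVar 0) k k ltac:(lia) k_le.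
by exists t => w w_le; have /= := Ht w w_le; case: ifP; lia.
Qed.

Definition thr k := sval (cid (threshold_term k)).

Lemma evalL_thr k w : (forall i, w i <= n) -> evalL n w (thr k) = if k <= w 0 then n else 0.
Proof. by rewrite /thr; case: cid => t; apply. Qed.

End ThresholdTerms.

Fixpoint tsubst (s : nat -> term) (t : term) : term :=
  match t with
  | tVar i => s i
  | tZero => tZero
  | tOne => tOne
  | tMeet t1 t2 => tMeet (tsubst s t1) (tsubst s t2)
  | tJoin t1 t2 => tJoin (tsubst s t1) (tsubst s t2)
  | tOdot t1 t2 => tOdot (tsubst s t1) (tsubst s t2)
  | tOplus t1 t2 => tOplus (tsubst s t1) (tsubst s t2)
  end.

Lemma eval_tsubst (A : pmvAlg) (v : nat -> A) s t :
  eval v (tsubst s t) = eval (fun i => eval v (s i)) t.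
Proof. by elim: t => //= *; congr (_ _ _). Qed.

Lemma evalL_tsubst n v s t : evalL n v (tsubst s t) = evalL n (fun i => evalL n v (s i)) t.
Proof. by elim: t => //= *; congr (_ _ _). Qed.

Definition tthr n k s := tsubst (fun=> s) (thr n k).

Definition tau n (A : pmvAlg) k (a : A) := eval (fun _ : nat => a) (thr n k).

Lemma evalL_tthr n k s w : (forall i, w i <= n) ->
  evalL n w (tthr n k s) = if k <= evalL n w s then n else 0.
Proof. by move=> w_le; rewrite evalL_tsubst evalL_thr // => i; apply: evalL_le. Qed.

Lemma eval_tthr n (A : pmvAlg) k s (v : nat -> A) : eval v (tthr n k s) = tau n k (eval v s).
Proof. exact: eval_tsubst. Qed.

Ltac PL_check :=
  let w := fresh "w" in let w_le := fresh "w_le" in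
  move=> w w_le /=; rewrite ?evalL_tthr //= ?evalL_thr //;
  have := w_le 0; have := w_le 1; rewrite /odotL /oplusL; repeat case: ifP; lia.

(* [transfer HA s t v] checks the identity [s = t] in PL_n by case analysis
   on the values of the variables and adds its instance [eval v s = eval v t]
   in [A] as a premise of the goal. *)
Tactic Notation "transfer" constr(HA) constr(s) constr(t) constr(v) :=
  have /= := HA s t ltac:(PL_check) v; rewrite ?eval_tthr /=.

Notation x0 := (tVar 0).
Notation x1 := (tVar 1).
Notation x2 := (tVar 2).
Notation val1 a := (fun _ : nat => a).
Notation val2 a b := (fun i : nat => if i is 0 then a else b).
Notation val3 a b c := (fun i : nat => match i with 0 => a | 1 => b | _ => c end).

Section Skeleton.
Variables (n : nat) (A : pmvAlg).
Hypothesis HA : in_PMV n A.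
Implicit Types a b : A.

Lemma skel_eq (s t : skel A) : sval s = sval t -> s = t.
Proof. by case: s t => [a Ha] [b Hb] /= eab; subst b; rewrite (Prop_irrelevance Ha Hb). Qed.

Lemma idem_pmeet a b : poplus a a = a -> poplus b b = b ->
  poplus (pmeet a b) (pmeet a b) = pmeet a b.
Proof.
move=> Ha Hb.
transfer HA (tOplus (tMeet x0 x1) (tMeet x0 x1)) (tMeet (tOplus x0 x0) (tOplus x1 x1)) (val2 a b).
by rewrite Ha Hb.
Qed.

Lemma idem_pjoin a b : poplus a a = a -> poplus b b = b ->
  poplus (pjoin a b) (pjoin a b) = pjoin a b.
Proof.
move=> Ha Hb.
transfer HA (tOplus (tJoin x0 x1) (tJoin x0 x1)) (tJoin (tOplus x0 x0) (tOplus x1 x1)) (val2 a b).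
by rewrite Ha Hb.
Qed.

Lemma idem_pzero : poplus (pzero A) (pzero A) = pzero A.
Proof. by transfer HA (tOplus tZero tZero) tZero (val1 (pzero A)). Qed.

Lemma idem_pone : poplus (pone A) (pone A) = pone A.
Proof. by transfer HA (tOplus tOne tOne) tOne (val1 (pone A)). Qed.

Definition skel_meet (s t : skel A) : skel A :=
  exist _ (pmeet (sval s) (sval t)) (idem_pmeet (proj2_sig s) (proj2_sig t)).
Definition skel_join (s t : skel A) : skel A :=
  exist _ (pjoin (sval s) (sval t)) (idem_pjoin (proj2_sig s) (proj2_sig t)).
Definition skel_bot : skel A := exist _ (pzero A) idem_pzero.
Definition skel_top : skel A := exist _ (pone A) idem_pone.

Lemma skel_meetC : commutative skel_meet.
Proof.
by move=> [a ?] [b ?]; apply: skel_eq; transfer HA (tMeet x0 x1) (tMeet x1 x0) (val2 a b).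
Qed.

Lemma skel_joinC : commutative skel_join.
Proof.
by move=> [a ?] [b ?]; apply: skel_eq; transfer HA (tJoin x0 x1) (tJoin x1 x0) (val2 a b).
Qed.

Lemma skel_meetA : associative skel_meet.
Proof.
move=> [a ?] [b ?] [c ?]; apply: skel_eq.
by transfer HA (tMeet x0 (tMeet x1 x2)) (tMeet (tMeet x0 x1) x2) (val3 a b c).
Qed.

Lemma skel_joinA : associative skel_join.
Proof.
move=> [a ?] [b ?] [c ?]; apply: skel_eq.
by transfer HA (tJoin x0 (tJoin x1 x2)) (tJoin (tJoin x0 x1) x2) (val3 a b c).
Qed.

Lemma skel_joinKI y x : skel_meet x (skel_join x y) = x.
Proof.
by case: x y => [a ?] [b ?]; apply: skel_eq; transfer HA (tMeet x0 (tJoin x0 x1)) x0 (val2 a b).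
Qed.

Lemma skel_meetKU y x : skel_join x (skel_meet x y) = x.
Proof.
by case: x y => [a ?] [b ?]; apply: skel_eq; transfer HA (tJoin x0 (tMeet x0 x1)) x0 (val2 a b).
Qed.

Lemma skel_meetUl : left_distributive skel_meet skel_join.
Proof.
move=> [a ?] [b ?] [c ?]; apply: skel_eq.
by transfer HA (tMeet (tJoin x0 x1) x2) (tJoin (tMeet x0 x2) (tMeet x1 x2)) (val3 a b c).
Qed.

Lemma skel_meetxx : idempotent_op skel_meet.
Proof. by move=> [a ?]; apply: skel_eq; transfer HA (tMeet x0 x0) x0 (val1 a). Qed.

Lemma skel_meet0x x : skel_meet skel_bot x = skel_bot.
Proof. by case: x => [a ?]; apply: skel_eq; transfer HA (tMeet tZero x0) tZero (val1 a). Qed.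

Lemma skel_meetx1 x : skel_meet x skel_top = x.
Proof. by case: x => [a ?]; apply: skel_eq; transfer HA (tMeet x0 tOne) x0 (val1 a). Qed.

End Skeleton.

(* The lattice laws of the skeleton are identities of PL_n, so its lattice
   structure lives on a copy of [skel A] indexed by the proof of [in_PMV n A]. *)
Definition skelL n (A : pmvAlg) (HA : in_PMV n A) := skel A.

HB.instance Definition _ n A HA := gen_eqMixin (@skelL n A HA).
HB.instance Definition _ n A HA := gen_choiceMixin (@skelL n A HA).
HB.instance Definition _ n A HA :=
  Order.isMeetJoinDistrLattice.Build (Order.Disp tt tt) (@skelL n A HA)
    (fun _ _ => erefl) (fun _ _ => erefl) (@skel_meetC n A HA) (@skel_joinC n A HA)
    (@skel_meetA n A HA) (@skel_joinA n A HA) (@skel_joinKI n A HA) (@skel_meetKU n A HA)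
    (@skel_meetUl n A HA) (@skel_meetxx n A HA).

Section SkeletonBounds.
Variables (n : nat) (A : pmvAlg) (HA : in_PMV n A).
Local Open Scope order_scope.

Lemma skel_le0x (s : skelL HA) : (skel_bot HA : skelL HA) <= s.
Proof. by apply/meet_idPl/skel_meet0x. Qed.

Lemma skel_lex1 (s : skelL HA) : s <= (skel_top HA : skelL HA).
Proof. by apply/meet_idPl/skel_meetx1. Qed.

End SkeletonBounds.

HB.instance Definition _ n A HA :=
  Order.hasBottom.Build (Order.Disp tt tt) (@skelL n A HA) (@skel_le0x n A HA).
HB.instance Definition _ n A HA :=
  Order.hasTop.Build (Order.Disp tt tt) (@skelL n A HA) (@skel_lex1 n A HA).

Section Unit.
Variables (n : nat) (A : pmvAlg).
Hypothesis HA : in_PMV n A.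
Implicit Types a b c : A.
Local Notation S := (skelL HA).
Local Notation tau := (tau n).

Lemma tau_idem k a : poplus (tau k a) (tau k a) = tau k a.
Proof. by transfer HA (tOplus (tthr n k x0) (tthr n k x0)) (tthr n k x0) (val1 a). Qed.

Definition tauS k a : S := exist _ (tau k a) (tau_idem k a).

Lemma tauS0 a : tauS 0 a = \top%O.
Proof. by apply: skel_eq; transfer HA (tthr n 0 x0) tOne (val1 a). Qed.

Lemma tauS_gt k a : n < k -> tauS k a = \bot%O.
Proof. by move=> k_gt; apply: skel_eq; transfer HA (tthr n k x0) tZero (val1 a). Qed.

Lemma tauS_le i k a : i <= k -> (tauS k a <= tauS i a)%O.
Proof.
move=> ik; apply/meet_idPl/skel_eq.
by transfer HA (tMeet (tthr n k x0) (tthr n i x0)) (tthr n k x0) (val1 a).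
Qed.

Lemma tauS_meet k a b : tauS k (pmeet a b) = (tauS k a `&` tauS k b)%O.
Proof.
apply: skel_eq.
by transfer HA (tthr n k (tMeet x0 x1)) (tMeet (tthr n k x0) (tthr n k x1)) (val2 a b).
Qed.

Lemma tauS_join k a b : tauS k (pjoin a b) = (tauS k a `|` tauS k b)%O.
Proof.
apply: skel_eq.
by transfer HA (tthr n k (tJoin x0 x1)) (tJoin (tthr n k x0) (tthr n k x1)) (val2 a b).
Qed.

Lemma tauS_zero k : 0 < k -> tauS k (pzero A) = \bot%O.
Proof. by move=> k_gt0; apply: skel_eq; transfer HA (tthr n k tZero) tZero (val1 (pzero A)). Qed.

Lemma tauS_one k : k <= n -> tauS k (pone A) = \top%O.
Proof. by move=> k_le; apply: skel_eq; transfer HA (tthr n k tOne) tOne (val1 (pone A)). Qed.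

Lemma tauS_odot_le i j k a b : 0 < k -> i + j = n + k + 1 ->
  (tauS k (podot a b) <= tauS i a `|` tauS j b)%O.
Proof.
move=> k_gt0 ij; apply/meet_idPl/skel_eq.
by transfer HA (tMeet (tthr n k (tOdot x0 x1)) (tJoin (tthr n i x0) (tthr n j x1)))
  (tthr n k (tOdot x0 x1)) (val2 a b).
Qed.

Lemma tauS_odot_ge i j k a b : i + j = n + k ->
  (tauS i a `&` tauS j b <= tauS k (podot a b))%O.
Proof.
move=> ij; apply/meet_idPl/skel_eq.
by transfer HA (tMeet (tMeet (tthr n i x0) (tthr n j x1)) (tthr n k (tOdot x0 x1)))
  (tMeet (tthr n i x0) (tthr n j x1)) (val2 a b).
Qed.

Lemma tauS_oplus_le i j k a b : i + j = k + 1 ->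
  (tauS k (poplus a b) <= tauS i a `|` tauS j b)%O.
Proof.
move=> ij; apply/meet_idPl/skel_eq.
by transfer HA (tMeet (tthr n k (tOplus x0 x1)) (tJoin (tthr n i x0) (tthr n j x1)))
  (tthr n k (tOplus x0 x1)) (val2 a b).
Qed.

Lemma tauS_oplus_ge i j k a b : i + j = k -> k <= n ->
  (tauS i a `&` tauS j b <= tauS k (poplus a b))%O.
Proof.
move=> ij k_le; apply/meet_idPl/skel_eq.
by transfer HA (tMeet (tMeet (tthr n i x0) (tthr n j x1)) (tthr n k (tOplus x0 x1)))
  (tMeet (tthr n i x0) (tthr n j x1)) (val2 a b).
Qed.

Lemma skel_dualP (x : skel A -> bool) : skel_dual x <-> @lat_dual _ S x.
Proof.
split=> [[xI xU x_bot x_top] | [xI xU x_bot x_top]]; split.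
- by move=> s t; apply: xI.
- by move=> s t; apply: xU.
- exact: x_bot.
- exact: x_top.
- by move=> s t u E; rewrite -xI; congr x; apply: skel_eq.
- by move=> s t u E; rewrite -xU; congr x; apply: skel_eq.
- by move=> u E; rewrite -x_bot; congr x; apply: skel_eq.
- by move=> u E; rewrite -x_top; congr x; apply: skel_eq.
Qed.

Definition eta a (x : skel A -> bool) := count (fun k => x (tauS k a)) (iota 1 n).

Lemma eta_le a x : eta a x <= n.
Proof. by rewrite /eta -[X in _ <= X](size_iota 1 n) count_size. Qed.

Section Point.
Variable x : S -> bool.
Hypothesis Dx : lat_dual x.

Lemma tauS_dual k a : x (tauS k a) = (k <= eta a x).
Proof.
have [xI xU x_bot x_top] := Dx.
case: (posnP k) => [-> | k_gt0]; first by rewrite tauS0 x_top.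
case: (leqP k n) => k_le; last by rewrite tauS_gt // x_bot; have := eta_le a x; lia.
apply: count_iota_downclosed; last lia.
by move=> i j ij jn; apply: lat_dual_le Dx _; apply: tauS_le; lia.
Qed.

Lemma eta_meet a b : eta (pmeet a b) x = minn (eta a x) (eta b x).
Proof.
apply: count_iota_prefix => [|k _]; first by have := eta_le a x; lia.
by case: Dx => xI _ _ _; rewrite tauS_meet xI !tauS_dual leq_min.
Qed.

Lemma eta_join a b : eta (pjoin a b) x = maxn (eta a x) (eta b x).
Proof.
apply: count_iota_prefix => [|k _]; first by have := eta_le a x; have := eta_le b x; lia.
by case: Dx => _ xU _ _; rewrite tauS_join xU !tauS_dual leq_max.
Qed.

Lemma eta_odot a b : eta (podot a b) x = odotL n (eta a x) (eta b x).
Proof.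
have [xI xU _ _] := Dx; have := eta_le a x; have := eta_le b x; rewrite /odotL => ebn ean.
apply: count_iota_prefix => [|k k_range]; first lia.
apply/idP/idP => [xk | k_le].
- have := lat_dual_le Dx (@tauS_odot_le (eta a x).+1 (n + k - eta a x) k a b _ _) xk.
  by rewrite xU !tauS_dual; lia.
- apply: lat_dual_le Dx (@tauS_odot_ge (eta a x) (n + k - eta a x) k a b _) _; first lia.
  by rewrite xI !tauS_dual; lia.
Qed.

Lemma eta_oplus a b : eta (poplus a b) x = oplusL n (eta a x) (eta b x).
Proof.
have [xI xU _ _] := Dx; have := eta_le a x; have := eta_le b x; rewrite /oplusL => ebn ean.
apply: count_iota_prefix => [|k k_range]; first lia.
apply/idP/idP => [xk | k_le].
- have := lat_dual_le Dx (@tauS_oplus_le (eta a x).+1 (k - eta a x) k a b _) xk.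
  by rewrite xU !tauS_dual; lia.
- apply: lat_dual_le Dx (@tauS_oplus_ge (minn (eta a x) k) (k - minn (eta a x) k) k a b _ _) _.
  1,2: lia.
  by rewrite xI !tauS_dual; lia.
Qed.

Lemma eta_zero : eta (pzero A) x = 0.
Proof.
apply: count_iota_prefix => // k k_range.
by case: Dx => _ _ x_bot _; rewrite tauS_zero ?x_bot //; lia.
Qed.

Lemma eta_one : eta (pone A) x = n.
Proof.
apply: count_iota_prefix => // k k_range.
by case: Dx => _ _ _ x_top; rewrite tauS_one ?x_top //; lia.
Qed.

End Point.

Lemma eta_in_PP a : in_PP n (@skel_dual A) (eta a).
Proof.
split=> [x _ | x y _ _ xy | x _]; first exact: eta_le.
  by apply: sub_count => k; apply/implyP/xy.
exists [seq tauS k a | k <- iota 1 n] => y _ y_x.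
by apply: eq_in_count => k k_in; apply/y_x/(@InP S)/map_f.
Qed.

Lemma eta_hom : PP_hom n (@skel_dual A) eta.
Proof.
split=> [|x /skel_dualP Dx]; first exact: eta_in_PP.
by split; [split | split]; move=> *;
  rewrite ?eta_meet ?eta_join ?eta_odot ?eta_oplus ?eta_zero ?eta_one.
Qed.

(* By induction on [m], from the PL_n identity
   [x ∧ (y ∨ τ_m y) ≤ y ∨ τ_(m+1) x]; for [m = n] it gives [a ≤ b]. *)
Lemma tau_meet_chain a b m : (forall k, tau k a = tau k b) ->
  pmeet a (pjoin b (tau m.+1 b)) = a.
Proof.
move=> tau_ab; elim: m => [|m IH].
  transfer HA x0 (tMeet x0 (tJoin x1 (tthr n 1 x0))) (val2 a b).
  by rewrite tau_ab => <-.
transfer HA (tMeet (tMeet x0 (tJoin x1 (tthr n m.+1 x1))) (tJoin x1 (tthr n m.+2 x0)))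
  (tMeet x0 (tJoin x1 (tthr n m.+1 x1))) (val2 a b).
by rewrite IH tau_ab.
Qed.

Lemma tau_inj a b : (forall k, tau k a = tau k b) -> a = b.
Proof.
have meet_of_tau a' b' : (forall k, tau k a' = tau k b') -> pmeet a' b' = a'.
  move=> tau_ab; have := tau_meet_chain n tau_ab.
  transfer HA (tthr n n.+1 x1) tZero (val2 a' b') => ->.
  by transfer HA (tJoin x1 tZero) x1 (val2 a' b') => ->.
move=> tau_ab; rewrite -(meet_of_tau a b) // -[RHS](meet_of_tau b a) //.
by transfer HA (tMeet x0 x1) (tMeet x1 x0) (val2 a b).
Qed.

Lemma eta_inj a b : PP_eq (@skel_dual A) (eta a) (eta b) -> a = b.
Proof.
move=> eta_ab; apply: tau_inj => k.
suff : tauS k a = tauS k b by move=> /(congr1 sval).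
apply: lat_dual_inj => x Dx; rewrite !tauS_dual // eta_ab //; exact/skel_dualP.
Qed.

Lemma tau_fix a k : poplus a a = a -> 0 < k <= n -> tau k a = a.
Proof.
move=> a_idem k_range.
have tmul_a m : 0 < m -> eval (val1 a) (tmul x0 m) = a.
  elim: m => [// | [|m] IH _] /=; last by rewrite /= in IH; rewrite IH.
  by transfer HA (tOplus x0 tZero) x0 (val1 a).
have tmul_fixed : PL_identity n (tthr n k (tmul x0 n)) (tmul x0 n).
  move=> w w_le; rewrite evalL_tthr // evalL_tmul /=; have := w_le 0.
  case: (posnP (w 0)) => [-> | w0_gt0]; first by rewrite muln0; case: ifP; lia.
  by have := leq_pmulr n w0_gt0; case: ifP; lia.
by have := HA tmul_fixed (val1 a); rewrite eval_tthr tmul_a //; lia.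
Qed.

Section Universal.
Hypothesis n_gt0 : 0 < n.
Variables (d : Order.disp_t) (L : tbDistrLatticeType d) (f : A -> (L -> bool) -> nat).
Hypothesis Hf : PP_hom n (@lat_dual d L) f.

Lemma hom_le a y : lat_dual y -> f a y <= n.
Proof. by case: (proj1 Hf a) => hom_le _ _; apply: hom_le. Qed.

Lemma hom_eval y (v : nat -> A) t : lat_dual y -> f (eval v t) y = evalL n (fun i => f (v i) y) t.
Proof.
move=> Dy; have [[fI fU fO fP] [f0 f1]] := proj2 Hf y Dy.
by elim: t => //= t1 IH1 t2 IH2; rewrite ?fI ?fU ?fO ?fP IH1 IH2.
Qed.

Lemma hom_tau k a y : lat_dual y -> f (tau k a) y = if k <= f a y then n else 0.
Proof. by move=> Dy; rewrite /tau hom_eval // evalL_thr // => i; apply: hom_le. Qed.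

Definition adjunct (s : skel A) : L := sval (cid (in_PP_top_principal (proj1 Hf (sval s)))).

Lemma adjunct_dual s y : lat_dual y -> y (adjunct s) = (f (sval s) y == n).
Proof. by rewrite /adjunct; case: cid => l; apply. Qed.

Lemma adjunct_hom : skel_lat_hom adjunct.
Proof.
split=> [s t u E | s t u E | u E | u E]; apply: lat_dual_inj => y Dy;
  have [[fI fU _ _] [f0 f1]] := proj2 Hf y Dy; have [yI yU y0 y1] := Dy;
  rewrite ?yI ?yU ?y0 ?y1 !adjunct_dual // E ?fI ?fU ?f0 ?f1 ?eqxx //.
- by have := hom_le (sval s) Dy; have := hom_le (sval t) Dy; do 3 case: eqP; lia.
- by have := hom_le (sval s) Dy; have := hom_le (sval t) Dy; do 3 case: eqP; lia.
- by apply/eqP; lia.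
Qed.

Lemma adjunct_factor a y : lat_dual y -> f a y = eta a (fun s => y (adjunct s)).
Proof.
move=> Dy; symmetry; apply: count_iota_prefix => [|k k_range]; first exact: hom_le.
by rewrite adjunct_dual //= hom_tau //; case: leqP => _; [rewrite eqxx | apply/eqP; lia].
Qed.

Lemma adjunct_unique (g' : skel A -> L) :
  (forall a y, lat_dual y -> f a y = eta a (fun s => y (g' s))) -> forall s, g' s = adjunct s.
Proof.
move=> g'_factor s; apply: lat_dual_inj => y Dy; rewrite adjunct_dual // g'_factor //.
rewrite /eta (@eq_in_count _ _ (fun=> y (g' s))); last first.
  move=> k; rewrite mem_iota => k_range /=; congr (y (g' _)); apply: skel_eq.
  by apply: tau_fix; [exact: proj2_sig s | lia].
case: (y (g' s)); first by rewrite (@eq_count _ _ predT) // count_predT size_iota eqxx.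
by rewrite (@eq_count _ _ pred0) // count_pred0; apply/esym/negbTE/eqP; lia.
Qed.

End Universal.

End Unit.

Theorem corollary4p8 (n : nat) (hn : (1 <= n)%N) (A : pmvAlg) :
  in_PMV n A ->
  exists eta : A -> (skel A -> bool) -> nat,
    is_unit n eta /\
    (forall a b : A, PP_eq (@skel_dual A) (eta a) (eta b) -> a = b).
Proof.
move=> HA; exists (eta HA); split; last exact: eta_inj.
split=> [|d L f Hf]; first exact: eta_hom.
exists (adjunct Hf); split; first exact: adjunct_hom.
- exact: adjunct_factor.
- by move=> g' _ g'_factor; apply: adjunct_unique.
Qed.
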